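(* Let $d\in\{1,2\}$ and $N\ge1$. Then $$E_Q(K(N)^2)=\sum_{n=0}^N\ \sum_{1\le i_1<\cdots<i_n\le N}c^{2n}_{N,d}\sum_{x_1,\dots,x_n\in\mathbb{Z}^d}\ \prod_{k=1}^n p_0^2(i_k-i_{k-1},x_k-x_{k-1})\left(\sum_{x\in\mathbb{Z}^d}|x|^2p_0(N-i_n,x-x_n)\right)^2,$$ with the conventions $i_0=0$, $x_0=0$.
   Context: $P^N_0$ is the uniform probability measure on nearest-neighbour walks $\omega:\{0,\dots,N\}\to\mathbb{Z}^d$ with $\omega(0)=0$, $|\omega(n)-\omega(n-1)|=1$; $p_0(n,x)$ is the probability that simple random walk on $\mathbb{Z}^d$ started at $0$ is at $x$ at time $n$. The environment $h=\{h(n,x)\}$ is i.i.d. with $h(n,x)=\pm1$ each with probability $1/2$ on $(H,\mathcal{G},Q)$, independent of the walk; $E_Q$ is expectation under $Q$. $c_{N,d}>0$ are the scaling constants (with $\lim c_{N,1}^2N^{1/2}=0$ for $d=1$, $\lim c_{N,2}^2\log N=0$ for $d=2$). $K(N)=\int\prod_{n=1}^N[1+c_{N,d}h(n,\omega(n))]\,|\omega(N)|^2\,dP^N_0(\omega)$. *)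

From HB Require Import structures.
From mathcomp Require Import all_boot all_order all_algebra.
From mathcomp Require Import all_classical all_reals all_analysis.
Set Implicit Arguments. Unset Strict Implicit. Unset Printing Implicit Defensive.
Import Order.TTheory GRing.Theory Num.Theory.
Local Open Scope ring_scope.
Local Open Scope classical_set_scope.

(* A nearest-neighbour step: +- e_j, encoded by (j, sign). *)
Definition step (d : nat) (s : 'I_d * bool) : 'rV[int]_d :=
  if s.2 then delta_mx 0 s.1 else - delta_mx 0 s.1.

(* A nearest-neighbour walk of length N started at 0 is determined by its
   sequence of steps f : {ffun 'I_N -> 'I_d * bool}; its position at time n
   is omega(n) = sum of the first n steps. This is a bijection between step
   sequences and walks, so the uniform measure P^N_0 on walks is the uniform
   measure on step sequences. *)
Definition wpos (d N : nat) (f : {ffun 'I_N -> 'I_d * bool}) (n : nat)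
  : 'rV[int]_d := \sum_(i < N | (i < n)%N) step (f i).

Definition sqnorm (R : realType) (d : nat) (x : 'rV[int]_d) : R :=
  \sum_(j < d) ((x 0 j)%:~R) ^+ 2.

Definition p0 (R : realType) (d n : nat) (x : 'rV[int]_d) : R :=
  (#|[pred f : {ffun 'I_n -> 'I_d * bool} | wpos f n == x]|)%:R
    / ((2 * d) ^ n)%:R.

Definition Kfun (R : realType) (Omega : Type) (d : nat) (c : R)
  (h : nat -> 'rV[int]_d -> Omega -> R) (N : nat) (w : Omega) : R :=
  ((2 * d) ^ N)%:R^-1 *
  \sum_(f : {ffun 'I_N -> 'I_d * bool})
     (\prod_(1 <= n < N.+1) (1 + c * h n (wpos f n) w)) * sqnorm R (wpos f N).

(* h = {h(n,x)} is an i.i.d. family of +-1 valued random variables, each equal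
   to 1 or -1 with probability 1/2: every h(n,x) is measurable with values in
   {1,-1}, and for every finite family of distinct indices and prescribed signs
   the joint probability is 2^-(size of family) (i.e. mutual independence with
   uniform marginals). *)
Definition iid_pm1 (dm : measure_display) (Omega : measurableType dm)
  (R : realType) (P : probability Omega R) (d : nat)
  (h : nat -> 'rV[int]_d -> Omega -> R) : Prop :=
  [/\ (forall n x, measurable_fun setT (h n x)),
      (forall n x w, h n x w = 1 \/ h n x w = -1) &
      (forall (s : seq (nat * 'rV[int]_d)) (e : nat * 'rV[int]_d -> bool),
          uniq s ->
          P [set w | forall i, i \in s -> h i.1 i.2 w = (if e i then 1 else -1)]
          = ((2 : R) ^- size s)%:E)].

(* conventions i_0 = 0, x_0 = 0: the k-th entry (k >= 1) of 0 :: t *)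
Definition iext (N n : nat) (t : n.-tuple 'I_N.+1) (k : nat) : nat :=
  nth 0%N (0%N :: map val t) k.
Definition xext (d n : nat) (t : n.-tuple 'rV[int]_d) (k : nat) : 'rV[int]_d :=
  nth 0 (0 :: val t) k.

Definition rhs3 (R : realType) (d N : nat) (c : R) : \bar R :=
  (\sum_(0 <= n < N.+1)
     \sum_(t : n.-tuple 'I_N.+1 | sorted ltn (0%N :: map (@nat_of_ord N.+1) t))
       ((c ^+ (2 * n))%:E *
        \esum_(xs in [set: n.-tuple 'rV[int]_d])
          ((\prod_(1 <= k < n.+1)
               p0 R (iext t k - iext t k.-1) (xext xs k - xext xs k.-1) ^+ 2)%:E *
           ((\esum_(y in [set: 'rV[int]_d])
               (sqnorm R y * p0 R (N - iext t n) (y - xext xs n))%:E) *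
            (\esum_(y in [set: 'rV[int]_d])
               (sqnorm R y * p0 R (N - iext t n) (y - xext xs n))%:E)))))%E.

From mathcomp Require Import all_boot all_order all_algebra.
From mathcomp Require Import all_classical all_reals all_analysis.
From mathcomp.algebra_tactics Require Import ring lra.
From mathcomp Require Import zify.
Import Order.TTheory GRing.Theory Num.Theory numFieldNormedType.Exports.
Set Implicit Arguments. Unset Strict Implicit.
Local Open Scope ring_scope.
Local Open Scope classical_set_scope.

(* Write K(N) as the mean over N-step walks u of prod_n (1 + c h(n,u_n)) |u_N|^2 and
   square it, which gives a mean over two independent walks u, v.  Only the finitely many
   signs h(n,x) at sites visited by some walk matter, and their vector is uniform on
   {+-1}^sites; by independence, E_Q[(1 + c h(n,u_n)) (1 + c h(n,v_n))] = 1 + c^2 1{u_n = v_n}.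
   So E_Q K(N)^2 is the mean of |u_N|^2 |v_N|^2 prod_n (1 + c^2 1{u_n = v_n}) ([replica_mean]).
   Expanding the product over the sets of times i_1 < ... < i_n at which the walks must meet,
   and summing over their common positions x_k, the Markov property of the walk factors each
   term into the transition probabilities p_0(i_k - i_(k-1), x_k - x_(k-1)), once for each
   walk, and the two final factors sum_x |x|^2 p_0(N - i_n, x - x_n). *)

Lemma big_tuple_cons (R : Type) (idx : R) (op : Monoid.com_law idx)
    (T : finType) k (P : pred (seq T)) (F : seq T -> R) :
  \big[op/idx]_(t : k.+1.-tuple T | P t) F t =
  \big[op/idx]_(i : T) \big[op/idx]_(t : k.-tuple T | P (i :: t)) F (i :: t).
Proof.
rewrite (reindex (fun p : T * k.-tuple T => [tuple of p.1 :: p.2])) /=; last first.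
  exists (fun t : k.+1.-tuple T => (thead t, [tuple of behead t])).
    by move=> [x t] _ /=; congr pair; apply: val_inj.
  by move=> t _; rewrite [in RHS](tuple_eta t).
by rewrite (pair_big_dep xpredT (fun i (t : k.-tuple T) => P (i :: t))
              (fun i (t : k.-tuple T) => F (i :: t))).
Qed.

Section SeqSums.
Variables (T : finType) (R : pzRingType).

Fixpoint sum_seqs (n : nat) (G : seq T -> R) : R :=
  if n is k.+1 then \sum_(x : T) sum_seqs k (fun l => G (x :: l)) else G [::].

Lemma eq_sum_seqs n F G :
  (forall l, size l = n -> F l = G l) -> sum_seqs n F = sum_seqs n G.
Proof.
elim: n F G => [|n IH] F G FG /=; first exact: FG.
by apply: eq_bigr => x _; apply: IH => l sz_l; apply: FG; rewrite /= sz_l.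
Qed.

Lemma sum_seqsZ n a F : sum_seqs n (fun l => a * F l) = a * sum_seqs n F.
Proof.
elim: n F => [|n IH] F //=; rewrite mulr_sumr; apply: eq_bigr => x _; exact: IH.
Qed.

Lemma sum_seqsZr n a F : sum_seqs n (fun l => F l * a) = sum_seqs n F * a.
Proof.
elim: n F => [|n IH] F //=; rewrite mulr_suml; apply: eq_bigr => x _; exact: IH.
Qed.

Lemma sum_seqs_sum n (I : Type) (r : seq I) (P : pred I) F :
  sum_seqs n (fun l => \sum_(i <- r | P i) F i l) = \sum_(i <- r | P i) sum_seqs n (F i).
Proof.
elim: n F => [|n IH] F //=; rewrite exchange_big /=; apply: eq_bigr => x _.
exact: (IH (fun i l => F i (x :: l))).
Qed.

Lemma sum_seqs_cat a b F :
  sum_seqs (a + b) F = sum_seqs a (fun l1 => sum_seqs b (fun l2 => F (l1 ++ l2))).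
Proof. by elim: a F => [|a IH] F //=; apply: eq_bigr => x _; exact: IH. Qed.

Lemma sum_tuples n (G : seq T -> R) : \sum_(t : n.-tuple T) G t = sum_seqs n G.
Proof.
elim: n G => [|n IH] G /=.
  rewrite (eq_bigr (fun _ => G [::])) => [|t _]; last by rewrite tuple0.
  by rewrite sumr_const card_tuple expn0.
by rewrite (big_tuple_cons _ _ xpredT); apply: eq_bigr => x _; exact: (IH (fun l => G (x :: l))).
Qed.

Lemma sum_ffuns n (G : seq T -> R) :
  \sum_(f : {ffun 'I_n -> T}) G (fgraph f) = sum_seqs n G.
Proof.
rewrite (reindex (@Finfun _ _)); last first.
  by exists (@fgraph _ _) => f _; [exact: FinfunK | exact: fgraphK].
rewrite (eq_bigr (fun t => G (val t))) => [|t _]; last by rewrite FinfunK.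
by rewrite sum_tuples card_ord.
Qed.

End SeqSums.

Lemma sum_take_enum (V : nmodType) n k (F : 'I_n -> V) :
  \sum_(i <- take k (enum 'I_n)) F i = \sum_(i < n | (i < k)%N) F i.
Proof.
rewrite [RHS]big_mkcond -[index_enum _]enumT.
rewrite -[in RHS](cat_take_drop k (enum 'I_n)) big_cat /=.
rewrite [X in _ = _ + X]big1_seq ?addr0 => [|i /andP[_]]; last first.
  move/(map_f val); rewrite map_drop val_enum_ord drop_iota mem_iota add0n.
  by case/andP=> le_ki _; rewrite ltnNge le_ki.
rewrite big_seq [RHS]big_seq; apply: eq_bigr => i /(map_f val).
rewrite map_take val_enum_ord take_iota mem_iota add0n => /andP[_ lt_ik].
by rewrite (leq_trans lt_ik (geq_minl _ _)).
Qed.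

Lemma esum_single (R : realType) (T : choiceType) (a : T -> \bar R) t :
  (forall x, x != t -> a x = 0%E) -> (0 <= a t)%E -> \esum_(x in [set: T]) a x = a t.
Proof.
move=> a0 a_ge0; rewrite -(esum_set1 a_ge0) [RHS]esum_mkcond.
apply: eq_esum => x _; have [->|ne_xt] := eqVneq x t; first by rewrite mem_set.
by rewrite a0 // ifF //; apply/negbTE; rewrite notin_setE /= => /eqP; apply/negP.
Qed.

Section Walks.
Variables (R : realType) (d : nat).
Local Notation St := ('I_d * bool)%type.

Definition position (l : seq St) (k : nat) : 'rV[int]_d := \sum_(s <- take k l) step s.

Definition walk_mean (m : nat) (G : seq St -> R) : R := sum_seqs m G / ((2 * d) ^ m)%:R.

Lemma eq_walk_mean m F G :
  (forall l, size l = m -> F l = G l) -> walk_mean m F = walk_mean m G.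
Proof. by move=> FG; rewrite /walk_mean (eq_sum_seqs FG). Qed.

Lemma walk_meanZ m a G : walk_mean m (fun l => a * G l) = a * walk_mean m G.
Proof. by rewrite /walk_mean sum_seqsZ mulrA. Qed.

Lemma walk_meanZr m a G : walk_mean m (fun l => G l * a) = walk_mean m G * a.
Proof. by rewrite /walk_mean sum_seqsZr mulrAC. Qed.

Lemma walk_mean_sum m (I : Type) (r : seq I) (P : pred I) F :
  walk_mean m (fun l => \sum_(i <- r | P i) F i l) = \sum_(i <- r | P i) walk_mean m (F i).
Proof. by rewrite /walk_mean sum_seqs_sum mulr_suml. Qed.

Lemma walk_mean_cat a b F :
  walk_mean (a + b) F = walk_mean a (fun l1 => walk_mean b (fun l2 => F (l1 ++ l2))).
Proof.
by rewrite /walk_mean sum_seqs_cat sum_seqsZr expnD natrM invfM mulrA mulrAC.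
Qed.

Lemma walk_mean_tuples m G :
  walk_mean m G = \sum_(t : m.-tuple St) G t / ((2 * d) ^ m)%:R.
Proof. by rewrite /walk_mean -sum_tuples mulr_suml. Qed.

Lemma walk_mean_ge0 m G : (forall l, 0 <= G l) -> 0 <= walk_mean m G.
Proof.
by move=> G_ge0; rewrite walk_mean_tuples sumr_ge0 // => t _; rewrite divr_ge0.
Qed.

Lemma walk_mean0 m : walk_mean m (fun=> 0) = 0.
Proof. by rewrite walk_mean_tuples big1 // => t _; rewrite mul0r. Qed.

Lemma walk_mean_sqr m G :
  walk_mean m G ^+ 2 = walk_mean m (fun u => walk_mean m (fun v => G u * G v)).
Proof.
rewrite expr2 -walk_meanZr; apply: eq_walk_mean => u _.
by rewrite -walk_meanZ.
Qed.

Lemma position_catl l1 l2 k : (k <= size l1)%N -> position (l1 ++ l2) k = position l1 k.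
Proof.
move=> le_k; rewrite /position take_cat; case: ltnP => // ge_k.
have -> : k = size l1 by apply/eqP; rewrite eqn_leq le_k ge_k.
by rewrite subnn take0 cats0 take_size.
Qed.

Lemma position_catr l1 l2 k : (size l1 <= k)%N ->
  position (l1 ++ l2) k = position l1 (size l1) + position l2 (k - size l1).
Proof. by move=> le_k; rewrite /position take_cat ltnNge le_k /= big_cat take_size. Qed.

Lemma wpos_position n (f : {ffun 'I_n -> St}) k : wpos f k = position (fgraph f) k.
Proof. by rewrite /position fgraph_codom /= codomE -map_take big_map sum_take_enum. Qed.

Lemma p0_walk_mean m x : p0 R m x = walk_mean m (fun l => (position l m == x)%:R).
Proof.
rewrite /p0 /walk_mean -sum_ffuns -sum1_card natr_sum big_mkcond /=.
by congr (_ / _); apply: eq_bigr => f _; rewrite inE wpos_position; case: eqP.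
Qed.

Lemma esum_walk_mean_single (T : choiceType) m (G : T -> seq St -> R) (pt : seq St -> T) :
  (forall x l, 0 <= G x l) -> (forall x l, x != pt l -> G x l = 0) ->
  \esum_(x in [set: T]) (walk_mean m (G x))%:E = (walk_mean m (fun l => G (pt l) l))%:E.
Proof.
move=> G_ge0 G0; under eq_esum => x _ do rewrite walk_mean_tuples -sumEFin.
rewrite esum_sum => [|x t _ _]; last by rewrite lee_fin divr_ge0.
rewrite walk_mean_tuples -sumEFin; apply: eq_bigr => t _.
apply: esum_single => [x /G0 ->|]; first by rewrite mul0r.
by rewrite lee_fin divr_ge0.
Qed.

End Walks.

Lemma prod_zip_eq (R : pzSemiRingType) (S : Type) (T : eqType)
    (js : seq S) (xs : seq T) (F : S -> T) :
  size js = size xs -> \prod_(p <- zip js xs) ((F p.1 == p.2)%:R : R) = (xs == map F js)%:R.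
Proof.
elim: js xs => [|j js IH] [|x xs] //= => [_|[sz]]; first by rewrite big_nil.
by rewrite big_cons IH // eqseq_cons eq_sym; case: (x == F j); rewrite ?mul1r ?mul0r.
Qed.

Lemma prod_eq_map (R : pzSemiRingType) (S : Type) (T : eqType) (s : seq S) (F G : S -> T) :
  \prod_(j <- s) ((F j == G j)%:R : R) = (map F s == map G s)%:R.
Proof.
elim: s => [|j s IH] /=; first by rewrite big_nil.
by rewrite big_cons IH eqseq_cons; case: (F j == G j); rewrite ?mul1r ?mul0r.
Qed.

Section Markov.
Variables (R : realType) (d N : nat) (f : 'rV[int]_d -> R).
Local Notation St := ('I_d * bool)%type.

(* By [walk_mean_pinned], the mean of [f] at time [N] of the walk started from [z]
   at time [a], on the event that it is at [x_k] at time [j_k] for every [k]. *)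
Fixpoint pinned_mean (a : nat) (z : 'rV[int]_d) (js : seq nat) (xs : seq 'rV[int]_d) : R :=
  match js, xs with
  | j :: js', x :: xs' => p0 R (j - a) (x - z) * pinned_mean j x js' xs'
  | _, _ => walk_mean (N - a) (fun l => f (z + position l (N - a)))
  end.

Lemma walk_mean_pinned js xs a z :
  size js = size xs -> path ltn a js -> all (fun j => j <= N)%N js -> (a <= N)%N ->
  walk_mean (N - a) (fun l =>
    (\prod_(p <- zip js xs) (z + position l (p.1 - a) == p.2)%:R) *
      f (z + position l (N - a)))
  = pinned_mean a z js xs.
Proof.
elim: js xs a z => [|j js IH] [|x xs] a z //=.
  by move=> _ _ _ _; apply: eq_walk_mean => l _; rewrite big_nil mul1r.
move=> [sz] /andP[lt_aj path_js] /andP[le_jN all_js] le_aN.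
have lt_js : all (fun j' => j < j')%N js := order_path_min ltn_trans path_js.
have -> : (N - a = (j - a) + (N - j))%N by lia.
rewrite walk_mean_cat -(IH xs j x sz path_js all_js le_jN) p0_walk_mean -walk_meanZr.
apply: eq_walk_mean => l1 sz_l1; rewrite -walk_meanZ; apply: eq_walk_mean => l2 _.
rewrite big_cons /= position_catl ?sz_l1 //.
have [l1_x|ne] := eqVneq (position l1 (j - a)) (x - z); last first.
  rewrite (_ : (z + _ == x) = false) ?mul0r //.
  by apply: contraNF ne => /eqP <-; rewrite (addrC z) addrK.
have restart k : (j - a <= k)%N ->
    z + position (l1 ++ l2) k = x + position l2 (k - (j - a)).
  by move=> le_k; rewrite position_catr sz_l1 // l1_x addrA (addrC z) subrK.
rewrite l1_x (addrC z) subrK eqxx !mul1r restart ?leq_addr // addKn; congr (_ * _).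
rewrite big_seq [RHS]big_seq; apply: eq_bigr => -[j' x'] /(map_f fst).
rewrite -[map _ _]/(unzip1 (zip js xs)) unzip1_zip ?sz // => /(allP lt_js) lt_jj' /=.
by rewrite restart ?leq_sub2r 1?ltnW // -subnDA subnKC // ltnW.
Qed.

Lemma pinned_mean_prod js xs a z : size js = size xs ->
  pinned_mean a z js xs =
  (\prod_(1 <= k < (size js).+1)
      p0 R (nth 0 (a :: js) k - nth 0 (a :: js) k.-1)%N
           (nth 0 (z :: xs) k - nth 0 (z :: xs) k.-1)) *
  walk_mean (N - last a js) (fun l => f (last z xs + position l (N - last a js))).
Proof.
elim: js xs a z => [|j js IH] [|x xs] a z //= => [_|[sz]].
  by rewrite big_geq // mul1r.
rewrite big_nat_recl //= (IH xs j x sz) mulrA.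
by congr (_ * _ * _); apply: eq_big_nat => -[|k].
Qed.

Hypothesis f_ge0 : forall x, 0 <= f x.

Lemma esum_p0 m x :
  \esum_(y in [set: 'rV[int]_d]) (f y * p0 R m (y - x))%:E =
  (walk_mean m (fun l => f (x + position l m)))%:E.
Proof.
under eq_esum => y _ do rewrite p0_walk_mean -walk_meanZ.
rewrite (@esum_walk_mean_single R d _ m _ (fun l => x + position l m)) => [|y l|y l].
- by apply/congr1/eq_walk_mean => l _; rewrite [x + _ - x]addrC addKr eqxx mulr1.
- by rewrite mulr_ge0.
- move=> ne_y; rewrite (_ : (_ == _) = false) ?mulr0 //.
  by apply: contraNF ne_y => /eqP ->; rewrite addrC subrK.
Qed.

Lemma esum_pinned_sqr n (js : n.-tuple nat) :
  \esum_(xs in [set: n.-tuple 'rV[int]_d])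
     (walk_mean N (fun l =>
        (\prod_(p <- zip js xs) (position l p.1 == p.2)%:R) * f (position l N)) ^+ 2)%:E
  = (walk_mean N (fun u => walk_mean N (fun v =>
       f (position u N) * f (position v N) *
       \prod_(j <- js) (position u j == position v j)%:R)))%:E.
Proof.
have sz (xs : n.-tuple 'rV[int]_d) : size js = size xs by rewrite !size_tuple.
under eq_esum => xs _ do rewrite walk_mean_sqr.
rewrite (@esum_walk_mean_single R d _ N _ (fun u => map_tuple (position u) js)).
- apply/congr1/eq_walk_mean => u _; apply: eq_walk_mean => v _ /=.
  by rewrite !prod_zip_eq // prod_eq_map eqxx mul1r eq_sym; ring.
- move=> xs u; apply: walk_mean_ge0 => v.
  by rewrite !prod_zip_eq // mulr_ge0 // mulr_ge0.
- move=> xs u ne_xs; rewrite -(@walk_mean0 R d N); apply: eq_walk_mean => v _.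
  rewrite prod_zip_eq // (_ : (_ == _) = false) ?mul0r //.
  by apply: contraNF ne_xs => /eqP eq_xs; apply/eqP; exact: val_inj.
Qed.

End Markov.

Lemma prodrMl_seq (R : comPzRingType) (I : Type) (r : seq I) (a : R) (F : I -> R) :
  \prod_(i <- r) (a * F i) = a ^+ size r * \prod_(i <- r) F i.
Proof.
elim: r => [|i r IH]; first by rewrite !big_nil mulr1.
by rewrite !big_cons IH exprS; ring.
Qed.

Section SortedExpansion.
Variables (R : comPzRingType) (N : nat) (x : nat -> R).

Definition sorted_sum (a k : nat) : R :=
  \sum_(t : k.-tuple 'I_N.+1 | sorted ltn (a :: map (@nat_of_ord N.+1) t))
     \prod_(j <- map (@nat_of_ord N.+1) t) x j.

Lemma sorted_sum0 a : sorted_sum a 0 = 1.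
Proof.
rewrite /sorted_sum (eq_bigl xpredT) => [|t]; last by rewrite tuple0.
rewrite (eq_bigr (fun=> 1)) => [|t _]; last by rewrite tuple0 big_nil.
by rewrite sumr_const card_tuple expn0.
Qed.

Lemma sorted_sumS a k : sorted_sum a k.+1 = \sum_(i < N.+1 | (a < i)%N) x i * sorted_sum i k.
Proof.
pose ord_seq (l : seq 'I_N.+1) := map (@nat_of_ord N.+1) l.
rewrite /sorted_sum (big_tuple_cons _ _ (fun l => sorted ltn (a :: ord_seq l))
                       (fun l => \prod_(j <- ord_seq l) x j)).
rewrite [RHS]big_mkcond /=; apply: eq_bigr => i _.
case: ifP => [lt_ai|_] /=; last by rewrite big_pred0.
by rewrite mulr_sumr; apply: eq_bigr => t _; rewrite big_cons.
Qed.

Lemma prod_1D_first a :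
  \prod_(a.+1 <= n < N.+1) (1 + x n) =
  1 + \sum_(a.+1 <= i < N.+1) x i * \prod_(i.+1 <= n < N.+1) (1 + x n).
Proof.
have [k Nk] : exists k, (N - a = k)%N by exists (N - a)%N.
elim: k a Nk => [|k IH] a Nk; first by rewrite !big_geq ?addr0 //; lia.
have lt_aN : (a.+1 < N.+1)%N by lia.
rewrite big_ltn // [X in _ = 1 + X]big_ltn // mulrDl mul1r {1}(IH a.+1); first ring.
by lia.
Qed.

Lemma prod_1D_sorted_sum M a : (N - a <= M)%N ->
  \prod_(a.+1 <= n < N.+1) (1 + x n) = \sum_(k < M.+1) sorted_sum a k.
Proof.
elim: M a => [|M IH] a le_NaM.
  by rewrite big_ord_recl big_ord0 addr0 sorted_sum0 big_geq //; lia.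
rewrite big_ord_recl sorted_sum0 prod_1D_first; congr (_ + _).
under [RHS]eq_bigr => k _ do rewrite /= sorted_sumS.
rewrite exchange_big big_geq_mkord /=; apply: eq_bigr => i lt_ai.
by rewrite -mulr_sumr -IH //; lia.
Qed.

End SortedExpansion.

Section ReplicaMean.
Variables (R : realType) (d N : nat) (c : R).
Local Notation St := ('I_d * bool)%type.

Lemma sqnorm_ge0 (x : 'rV[int]_d) : 0 <= sqnorm R x.
Proof. by apply: sumr_ge0 => j _; exact: sqr_ge0. Qed.

Definition replica_mean : R :=
  walk_mean N (fun u : seq St => walk_mean N (fun v : seq St =>
    sqnorm R (position u N) * sqnorm R (position v N) *
    \prod_(1 <= n < N.+1) (1 + c ^+ 2 * (position u n == position v n)%:R))).

Lemma rhs3_term n (t : n.-tuple 'I_N.+1) :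
  sorted ltn (0%N :: map (@nat_of_ord N.+1) t) ->
  ((c ^+ (2 * n))%:E *
    \esum_(xs in [set: n.-tuple 'rV[int]_d])
      ((\prod_(1 <= k < n.+1)
          p0 R (iext t k - iext t k.-1) (xext xs k - xext xs k.-1) ^+ 2)%:E *
       ((\esum_(y in [set: 'rV[int]_d])
           (sqnorm R y * p0 R (N - iext t n) (y - xext xs n))%:E) *
        (\esum_(y in [set: 'rV[int]_d])
           (sqnorm R y * p0 R (N - iext t n) (y - xext xs n))%:E))))%E
  = (c ^+ (2 * n) * walk_mean N (fun u : seq St => walk_mean N (fun v : seq St =>
       sqnorm R (position u N) * sqnorm R (position v N) *
       \prod_(j <- map (@nat_of_ord N.+1) t) (position u j == position v j)%:R)))%:E.
Proof.
move=> sorted_t; set js := map_tuple (@nat_of_ord N.+1) t.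
have le_jsN : all (fun j => j <= N)%N js.
  by apply/allP => _ /mapP[i _ ->]; rewrite -ltnS ltn_ord.
have sz (xs : n.-tuple 'rV[int]_d) : size js = size xs by rewrite !size_tuple.
rewrite EFinM -(esum_pinned_sqr N (@sqnorm_ge0) js); congr (_ * _)%E.
apply: eq_esum => xs _; rewrite esum_p0; last exact: sqnorm_ge0.
have -> : iext t n = last 0%N js by have := nth_last 0%N (0%N :: js); rewrite /= size_tuple.
have -> : xext xs n = last 0 xs by have := nth_last 0 (0 :: val xs); rewrite /= size_tuple.
rewrite -!EFinM; congr (_%:E).
transitivity (pinned_mean N (@sqnorm R d) 0 0 js xs ^+ 2).
  by rewrite pinned_mean_prod // size_tuple prodrXl exprMn expr2.
rewrite -walk_mean_pinned // subn0; congr (_ ^+ 2); apply: eq_walk_mean => l _.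
by rewrite add0r; congr (_ * _); apply: eq_bigr => p _; rewrite add0r subn0.
Qed.

Lemma rhs3_replica_mean : rhs3 d N c = replica_mean%:E.
Proof.
rewrite /rhs3; under eq_bigr => n _.
  under eq_bigr => t sorted_t do rewrite (rhs3_term sorted_t).
  rewrite sumEFin; over.
rewrite sumEFin big_mkord /replica_mean; congr (_%:E).
under [RHS]eq_walk_mean => u _.
  under eq_walk_mean => v _ do rewrite (prod_1D_sorted_sum _ (leq_subr 0 N)) mulr_sumr.
  rewrite walk_mean_sum; over.
rewrite walk_mean_sum; apply: eq_bigr => k _.
under [RHS]eq_walk_mean => u _.
  under eq_walk_mean => v _ do rewrite /sorted_sum mulr_sumr.
  rewrite walk_mean_sum; over.
rewrite walk_mean_sum; apply: eq_bigr => t _; rewrite -walk_meanZ.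
apply: eq_walk_mean => u _; rewrite -walk_meanZ; apply: eq_walk_mean => v _.
by rewrite prodrMl_seq size_map size_tuple exprM; ring.
Qed.

End ReplicaMean.

Definition sign (R : pzRingType) (b : bool) : R := if b then 1 else -1.

Lemma sign_inj (R : realFieldType) : injective (@sign R).
Proof. by case=> -[] //= eq1; exfalso; lra. Qed.

Section SignVectors.
Variables (R : realFieldType) (I : eqType) (s : seq I).
Hypothesis s_uniq : uniq s.
Local Notation m := (size s).
Local Notation site := (tnth (in_tuple s)).

(* [e k] is the sign at the [k]-th site of [s]; [sign_at e i] is [false] for [i] not in [s]. *)
Definition sign_at (e : {ffun 'I_m -> bool}) (i : I) : bool :=
  nth false (fgraph e) (index i s).

Lemma sign_at_site e k : sign_at e (site k) = e k.
Proof. by rewrite /sign_at (tnth_nth (site k)) /= index_uniq // nth_fgraph_ord. Qed.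

Lemma prod_over_sites (t : seq I) (F : I -> R) : uniq t -> {subset t <= s} ->
  \prod_(i <- t) F i = \prod_(k < m) (if site k \in t then F (site k) else 1).
Proof.
move=> t_uniq t_s; have t_perm : perm_eq t [seq i <- s | i \in t].
  apply: uniq_perm; rewrite ?filter_uniq // => i.
  by rewrite mem_filter; case t_i: (i \in t); rewrite //= t_s.
by rewrite (perm_big _ t_perm) big_filter big_tnth big_mkcond.
Qed.

Lemma sum_signs_prod (t : seq I) (phi : I -> R -> R) : uniq t -> {subset t <= s} ->
  \sum_(e : {ffun 'I_m -> bool}) \prod_(i <- t) phi i (sign R (sign_at e i)) =
  2 ^+ m * \prod_(i <- t) ((phi i 1 + phi i (-1)) / 2).
Proof.
move=> t_uniq t_s.
have -> : (2 : R) ^+ m = \prod_(k < m) 2 by rewrite prodr_const card_ord.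
rewrite prod_over_sites // -big_split /=.
under eq_bigr => e _.
  rewrite prod_over_sites //; under eq_bigr => k _ do rewrite sign_at_site.
  over.
rewrite -(bigA_distr_bigA (fun k b => if site k \in t then phi (site k) (sign R b) else 1)).
by apply: eq_bigr => k _; rewrite big_bool /=; case: ifP => _; field.
Qed.

End SignVectors.

Section PairedSigns.
Variables (R : realFieldType) (T : eqType) (s : seq (nat * T)).
Hypothesis s_uniq : uniq s.

(* Sites at different times are distinct, so the factors for different [n] are
   independent; at time [n] the two sites coincide iff [a n = b n]. *)
Lemma sum_signs_pair_prod (N : nat) (c : R) (a b : nat -> T) :
  (forall n, (0 < n <= N)%N -> (n, a n) \in s /\ (n, b n) \in s) ->
  \sum_(e : {ffun 'I_(size s) -> bool}) \prod_(1 <= n < N.+1)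
     ((1 + c * sign R (sign_at e (n, a n))) * (1 + c * sign R (sign_at e (n, b n)))) =
  2 ^+ size s * \prod_(1 <= n < N.+1) (1 + c ^+ 2 * (a n == b n)%:R).
Proof.
move=> ab_s.
pose block n := if a n == b n then [:: (n, a n)] else [:: (n, a n); (n, b n)].
pose t := flatten [seq block n | n <- index_iota 1 N.+1].
pose phi (i : nat * T) (v : R) :=
  if a i.1 == b i.1 then (1 + c * v) ^+ 2 else 1 + c * v.
have prod_t (F : nat * T -> R) :
    \prod_(i <- t) F i = \prod_(1 <= n < N.+1) \prod_(i <- block n) F i.
  by rewrite big_flatten big_map.
have block_time n i : i \in block n -> i.1 = n.
  by rewrite /block; case: ifP => _; rewrite !inE; [move/eqP -> | case/orP => /eqP ->].
have t_uniq : uniq t.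
  rewrite /t; have : uniq (index_iota 1 N.+1) by exact: iota_uniq.
  elim: (index_iota 1 N.+1) => [|n r IH] //= /andP[n_r /IH r_uniq].
  rewrite cat_uniq r_uniq andbT; apply/andP; split.
    by rewrite /block; case: eqVneq => //= ab; rewrite inE xpair_eqE eqxx ab.
  apply/hasPn => i /flatten_mapP[n' n'_r /block_time i_n'].
  by apply: contra n_r => /block_time <-; rewrite i_n'.
have t_s : {subset t <= s}.
  move=> i /flatten_mapP[n]; rewrite mem_index_iota => /ab_s[a_s b_s].
  by rewrite /block; case: ifP => _; rewrite !inE; [move/eqP -> | case/orP => /eqP ->].
transitivity (\sum_(e : {ffun 'I_(size s) -> bool})
                \prod_(i <- t) phi i (sign R (sign_at e i))).
  apply: eq_bigr => e _; rewrite prod_t; apply: eq_bigr => n _.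
  rewrite /block /phi; case: eqVneq => [ab|ab]; rewrite !big_cons big_nil /= mulr1.
    by rewrite ab eqxx expr2.
  by rewrite (negbTE ab).
rewrite (sum_signs_prod s_uniq phi t_uniq t_s) prod_t; congr (_ * _).
apply: eq_bigr => n _; rewrite /block /phi.
case: eqVneq => [ab|ab]; rewrite !big_cons big_nil /= mulr1.
  by rewrite ab eqxx; field.
by rewrite (negbTE ab); field.
Qed.

End PairedSigns.

Section SignIntegral.
Variables (R : realType) (dm : measure_display) (Omega : measurableType dm).
Variables (Q : probability Omega R) (I : eqType) (g : I -> Omega -> R) (s : seq I).
Hypothesis g_meas : forall i, measurable_fun setT (g i).
Hypothesis g_pm1 : forall i w, g i w = 1 \/ g i w = -1.
Hypothesis s_uniq : uniq s.
Hypothesis g_law : forall e : I -> bool,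
  Q [set w | forall i, i \in s -> g i w = sign R (e i)] = ((2 : R) ^- size s)%:E.
Local Notation m := (size s).
Local Notation site := (tnth (in_tuple s)).

Definition signs (w : Omega) : {ffun 'I_m -> bool} := [ffun k => g (site k) w == 1].

Lemma sign_signs w k : sign R (signs w k) = g (site k) w.
Proof.
rewrite ffunE; case: (g_pm1 (site k) w) => ->; rewrite ?eqxx //.
by rewrite /sign ifF //; apply/negbTE/eqP => ?; lra.
Qed.

Lemma g_signs w i : i \in s -> g i w = sign R (sign_at (signs w) i).
Proof.
move=> s_i; have lt_i : (index i s < m)%N by rewrite index_mem.
have -> : i = site (Ordinal lt_i) by rewrite (tnth_nth i) /= nth_index.
by rewrite sign_at_site // sign_signs.
Qed.

Definition sign_event (e : {ffun 'I_m -> bool}) : set Omega :=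
  [set w | forall i, i \in s -> g i w = sign R (sign_at e i)].

Lemma sign_eventE e : sign_event e = [set w | signs w = e].
Proof.
apply/seteqP; split => w /=; last by move=> <- i; exact: g_signs.
move=> g_e; apply/ffunP => k; apply: (@sign_inj R).
by rewrite sign_signs -(sign_at_site s_uniq) g_e // mem_tnth.
Qed.

Lemma measurable_values (r : seq I) (v : I -> R) :
  measurable [set w | forall i, i \in r -> g i w = v i].
Proof.
elim: r => [|j r IH].
  by rewrite (_ : [set _ | _] = setT) //; apply/seteqP; split => w // _ i; rewrite in_nil.
rewrite (_ : [set _ | _] = g j @^-1` [set v j] `&` [set w | forall i, i \in r -> g i w = v i]).
  apply: measurableI => //; rewrite -[_ @^-1` _]setTI.
  exact: (g_meas j measurableT (measurable_set1 _)).
apply/seteqP; split => w /=.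
  by move=> w_jr; split=> [|i r_i]; apply: w_jr; rewrite inE ?eqxx ?r_i ?orbT.
by move=> [w_j w_r] i; rewrite inE => /orP[/eqP ->|/w_r].
Qed.

Lemma measurable_sign_event e : measurable (sign_event e).
Proof. exact: measurable_values. Qed.

Lemma integral_signs (G : {ffun 'I_m -> bool} -> R) : (forall e, 0 <= G e) ->
  (\int[Q]_w (G (signs w))%:E = ((2 : R) ^- m * \sum_e G e)%:E)%E.
Proof.
move=> G_ge0.
rewrite (eq_integral (fun w => \sum_e (G e * \1_(sign_event e) w)%:E)) => [|w _]; last first.
  rewrite sumEFin (bigD1 (signs w)) //= big1 => [|e ne_e].
    by rewrite indicE sign_eventE mem_set // mulr1 addr0.
  by rewrite indicE sign_eventE memNset ?mulr0 // => /esym/eqP; rewrite (negbTE ne_e).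
rewrite ge0_integral_sum // => [|e|e w _]; last first.
- by rewrite lee_fin mulr_ge0 // indicE ler0n.
- apply/measurable_realfun.measurable_EFinP/measurable_realfun.measurable_funM => //.
  exact: measurable_realfun.measurable_indic (measurable_sign_event e).
rewrite mulr_sumr -sumEFin; apply: eq_bigr => e _.
have meas_e := measurable_sign_event e.
rewrite (@integralZl_indic _ _ _ Q setT measurableT (fun=> sign_event e) (G e)) //; last first.
  by move=> G_neg; exfalso; have := G_ge0 e; lra.
rewrite integral_indic // setIT mulrC EFinM; congr (_ * _)%E; exact: g_law.
Qed.

End SignIntegral.

Section SecondMoment.
Variables (R : realType) (d N : nat) (c : R).
Local Notation St := ('I_d * bool)%type.

Definition sites : seq (nat * 'rV[int]_d) :=
  undup [seq (n, position (val u) n) | u <- enum {: N.-tuple St}, n <- index_iota 1 N.+1].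

Lemma sites_uniq : uniq sites.
Proof. exact: undup_uniq. Qed.

Lemma mem_sites (u : seq St) n : size u = N -> (0 < n <= N)%N -> (n, position u n) \in sites.
Proof.
move=> sz_u n_N; rewrite mem_undup; have -> : u = Tuple (introT eqP sz_u) by [].
by apply: (allpairs_f (fun (u : N.-tuple St) n => (n, position (val u) n)));
  rewrite ?mem_enum ?mem_index_iota.
Qed.

Definition K_signs (e : {ffun 'I_(size sites) -> bool}) : R :=
  walk_mean N (fun u : seq St =>
    (\prod_(1 <= n < N.+1) (1 + c * sign R (sign_at e (n, position u n)))) *
    sqnorm R (position u N)).

Lemma sum_K_signs_sqr :
  \sum_(e : {ffun 'I_(size sites) -> bool}) K_signs e ^+ 2 =
  2 ^+ size sites * replica_mean d N c.
Proof.
under eq_bigr => e _ do rewrite walk_mean_sqr.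
rewrite -walk_mean_sum /replica_mean -walk_meanZ; apply: eq_walk_mean => u sz_u.
rewrite -walk_mean_sum -walk_meanZ; apply: eq_walk_mean => v sz_v.
rewrite (eq_bigr (fun e => sqnorm R (position u N) * sqnorm R (position v N) *
  \prod_(1 <= n < N.+1) ((1 + c * sign R (sign_at e (n, position u n))) *
                         (1 + c * sign R (sign_at e (n, position v n)))))) => [|e _].
  rewrite -mulr_sumr sum_signs_pair_prod.
  - by rewrite mulrCA.
  - exact: sites_uniq.
  - by move=> n n_N; split; apply: mem_sites.
by rewrite big_split /=; ring.
Qed.

Lemma Kfun_signs (dm : measure_display) (Omega : measurableType dm)
    (h : nat -> 'rV[int]_d -> Omega -> R) :
  (forall n x w, h n x w = 1 \/ h n x w = -1) ->
  forall w, Kfun c h N w = K_signs (signs (fun i => h i.1 i.2) sites w).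
Proof.
move=> h_pm1 w; rewrite /Kfun /K_signs /walk_mean mulrC -sum_ffuns.
congr (_ / _); apply: eq_bigr => f _; rewrite wpos_position; congr (_ * _).
rewrite big_seq [RHS]big_seq; apply: eq_bigr => n; rewrite mem_index_iota => n_N.
have sz_f : size (fgraph f) = N by rewrite size_tuple card_ord.
by rewrite wpos_position (g_signs (fun i => h_pm1 i.1 i.2) sites_uniq w (mem_sites sz_f n_N)).
Qed.

End SecondMoment.

Theorem lemma3 (R : realType) (dm : measure_display) (Omega : measurableType dm)
  (Q : probability Omega R) (d : nat) (c : nat -> R)
  (h : nat -> 'rV[int]_d -> Omega -> R) (N : nat) :
  (d = 1%N \/ d = 2%N) ->
  (forall M, 0 < c M) ->
  (d = 1%N -> (fun M : nat => c M ^+ 2 * Num.sqrt (M%:R : R)) @ \oo --> (0 : R)) ->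
  (d = 2%N -> (fun M : nat => c M ^+ 2 * ln (M%:R : R)) @ \oo --> (0 : R)) ->
  iid_pm1 Q h ->
  (1 <= N)%N ->
  (\int[Q]_w ((Kfun (c N) h N w) ^+ 2)%:E)%E = rhs3 d N (c N).
Proof.
(* The identity needs none of the restrictions on [d], [c] and [N]. *)
move=> _ _ _ _ [h_meas h_pm1 h_law] _.
rewrite rhs3_replica_mean.
under eq_integral => w _ do rewrite (Kfun_signs N (c N) h_pm1).
rewrite (integral_signs (fun i => h_meas i.1 i.2) (fun i => h_pm1 i.1 i.2) (sites_uniq d N)
          (fun e => h_law _ e (sites_uniq d N))
          (fun e => sqr_ge0 (K_signs (c N) e))).
by rewrite sum_K_signs_sqr mulKf // expf_neq0 // pnatr_eq0.
Qed.
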